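(* Assume $X_0\in L^\infty$, $\beta\in\mathbb{R}$, $\lambda>0$. Let $w\in\mathscr{W}^{\mathrm{icx}}$. If $w(1)>w(1-)$, then $\inf_{Q\in\mathscr{Q}}L(Q,w;\beta,\lambda)=-\infty$.
   Context: $(\Omega,\mathcal{F},\mathbb{P})$ is a complete nonatomic probability space. $\rho\in L^2$ with $\mathbb{P}(\rho>0)=1$ and $\mathrm{Var}[\rho]>0$. For a random variable $X$, $Q_X(t)=\inf\{y:\mathbb{P}(X\le y)>t\}$ for $t\in[0,1)$, $Q_X(1):=\lim_{t\uparrow1}Q_X(t)$; $Q_0:=Q_{X_0}$. $\mathscr{Q}$ is the set of increasing, right-continuous $Q:[0,1)\to\mathbb{R}$ with $\int_0^1Q^2<\infty$ (extended by $Q(1)=Q(1-)$). $\mathscr{W}^{\mathrm{icx}}$ is the set of increasing convex $w:[0,1]\to[0,\infty)$ with $w(0)=0$; each $w$ is identified with the finite Borel measure on $[0,1]$ with distribution function $w$ (with $w(0-):=0$), so $\{1\}$ has mass $w(1)-w(1-)$. Define $$L(Q,w;\beta,\lambda)=\int_0^1(Q(s)-\beta)^2ds+\lambda\int_0^1Q(s)Q_\rho(1-s)ds-\Big(\int_{[0,1]}Q(s)dw(s)-\int_{[0,1]}Q_0(s)dw(s)\Big).$$ *)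

From HB Require Import structures.
From mathcomp Require Import all_boot all_order all_algebra.
From mathcomp Require Import all_classical all_reals all_analysis.
Set Implicit Arguments. Unset Strict Implicit. Unset Printing Implicit Defensive.
Import Order.TTheory GRing.Theory Num.Theory.
Import numFieldNormedType.Exports.
Local Open Scope classical_set_scope.
Local Open Scope ring_scope.

Definition nonatomic d (T : measurableType d) (R : realType)
  (mu : {measure set T -> \bar R}) : Prop :=
  forall A : set T, measurable A -> (0 < mu A)%E ->
    exists B : set T, [/\ measurable B, B `<=` A & (0 < mu B)%E /\ (mu B < mu A)%E].

(* Quantile function Q_X(t) = inf { y : P(X <= y) > t }, meaningful for
   t in [0,1).  (Outside [0,1) the value is irrelevant.) *)
Definition quantile d (T : measurableType d) (R : realType)
  (P : probability T R) (X : T -> R) (t : R) : R :=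
  inf [set y : R | (t%:E < P [set om | (X om <= y)%R])%E].

(* Extension of a function Q given on [0,1) to [0,1] by Q(1) := Q(1-),
   with values in the extended reals (Q(1-) may be +oo for Q in L^2). *)
Definition qext (R : realType) (Q : R -> R) (s : R) : \bar R :=
  if s < 1 then (Q s)%:E else lim ((Q t)%:E @[t --> 1^'-]).

Definition Qset (R : realType) : set (R -> R) :=
  [set Q : R -> R | {in `[0%R, 1%R[ &, forall s t, s <= t -> Q s <= Q t}
         /\ (forall s, 0 <= s < 1 -> Q t @[t --> s^'+] --> Q s)
         /\ (\int[lebesgue_measure]_(s in `[0%R, 1%R[) ((Q s) ^+ 2)%:E < +oo)%E].

Definition Wicx (R : realType) : set (R -> R) :=
  [set w : R -> R | {in `[0%R, 1%R] &, forall s t, s <= t -> w s <= w t}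
         /\ (forall x y t, 0 <= x <= 1 -> 0 <= y <= 1 -> 0 <= t <= 1 ->
               w ((1 - t) * x + t * y) <= (1 - t) * w x + t * w y)
         /\ (forall s, 0 <= s <= 1 -> 0 <= w s)
         /\ w 0 = 0].

(* mu is the finite Borel measure on [0,1] with distribution function w
   (with w(0-) := 0): mu(]-oo, x]) = 0 for x < 0, w(x) for x in [0,1],
   and w(1) for x > 1. *)
Definition is_measure_of_w (R : realType) (w : R -> R)
  (mu : {measure set R -> \bar R}) : Prop :=
  forall x : R, mu `]-oo, x]%classic =
    (if x < 0 then 0 else if x <= 1 then w x else w 1)%:E.

Definition Lfunctional (R : realType) (Q Q0 Qrho : R -> R)
  (mu : {measure set R -> \bar R}) (beta lambda : R) : \bar R :=
  (\int[lebesgue_measure]_(s in `[0%R, 1%R[) (((Q s - beta) ^+ 2)%:E)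
   + lambda%:E * \int[lebesgue_measure]_(s in `[0%R, 1%R[) ((Q s * Qrho (1 - s))%:E)
   - (\int[mu]_(s in `[0%R, 1%R]) qext Q s - \int[mu]_(s in `[0%R, 1%R]) qext Q0 s))%E.

(* The witness is Q(s) = (1 - s)^(-1/4).  It is increasing and continuous on
   [0,1[ and square integrable there, since the integral of (1 - s)^(-1/2) over
   [0,1[ is 2, but Q(1) := Q(1-) = +oo.  The jump w(1) > w(1-) of the
   distribution function means that dw charges the atom {1}, so the integral
   of Q against dw is +oo.  The integral of Q_0 against dw is finite, because
   X_0 is essentially bounded, hence so is its quantile function, and dw is a
   finite measure on [0,1].  Hence L(Q, w; beta, lambda) = -oo. *)

From HB Require Import structures.
From mathcomp Require Import all_boot all_order all_algebra.
From mathcomp Require Import all_classical all_reals all_analysis.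
From mathcomp Require Import unstable measurable_realfun ess_sup_inf lra.
Import Order.TTheory GRing.Theory Num.Theory.
Import numFieldNormedType.Exports.
Local Open Scope classical_set_scope.
Local Open Scope ring_scope.

Section itv_bigcup.
Context {R : realType}.

Lemma itvNyo_bigcup (a : R) :
  `]-oo, a[%classic = \bigcup_n `]-oo, a - n.+1%:R^-1]%classic.
Proof.
apply/seteqP; split => [x|x [n _]] /=; rewrite !in_itv /=; last first.
  by move=> /le_lt_trans; apply; rewrite ltrBlDr ltrDl invr_gt0 ltr0n.
move=> xa; exists (Num.truncn (a - x)^-1) => //=; rewrite in_itv /=.
rewrite lerBrDl addrC -lerBrDl -[leRHS]invrK.
by rewrite lef_pV2 ?posrE ?ltr0n// ?invr_gt0 ?subr_gt0// ltW// truncnS_gt.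
Qed.

Lemma nondecreasing_itv_onemV (l : itv_bound R) (c : R) :
  nondecreasing_seq (fun n => [set` Interval l (BRight (c - n.+1%:R^-1))]).
Proof.
move=> m n mn; apply/subsetPset/subset_itvl.
by rewrite bnd_simp lerD2l lerN2 lef_pV2 ?posrE// ler_nat.
Qed.

End itv_bigcup.

Section continuity_from_below.
Context {R : realType}.
Local Open Scope ereal_scope.

Lemma ge0_integral_itvco_le (f : R -> \bar R) (a b : R) (C : \bar R) :
  measurable_fun (`[a, b[ : set R) f -> (forall x, (a <= x < b)%R -> 0 <= f x) ->
  (forall r, (r < b)%R -> \int[lebesgue_measure]_(x in `[a, r]) f x <= C) ->
  \int[lebesgue_measure]_(x in `[a, b[) f x <= C.
Proof.
move=> mf f0 fC.
have sub_ab n : `[a, (b - n.+1%:R^-1)%R] `<=` `[a, b[.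
  by rewrite [X in _ `<=` X]itv_bnd_open_bigcup => x ax; exists n.
have cvg_int := ge0_nondecreasing_set_cvg_integral (mu := lebesgue_measure)
  (nondecreasing_itv_onemV (BLeft a) b) (fun=> measurable_itv _)
  (fun n => measurable_funS (measurable_itv _) (sub_ab n) mf)
  (fun n x abx => f0 x (sub_ab n x abx)).
rewrite itv_bnd_open_bigcup -(cvg_lim _ cvg_int)//.
apply: lime_le; first by apply/cvg_ex; eexists; exact: cvg_int.
by apply: nearW => n; apply: fC; rewrite ltrBlDr ltrDl invr_gt0 ltr0n.
Qed.

Lemma measure_itvNyo_le (mu : {measure set R -> \bar R}) (a : R) (C : \bar R) :
  (forall r, (r < a)%R -> mu `]-oo, r]%classic <= C) -> mu `]-oo, a[%classic <= C.
Proof.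
move=> muC; rewrite itvNyo_bigcup.
have cvg_mu := nondecreasing_cvg_mu (mu := mu) (fun=> measurable_itv _)
  (bigcupT_measurable _ (fun=> measurable_itv _)) (nondecreasing_itv_onemV -oo%O a).
rewrite -(cvg_lim _ cvg_mu)//.
apply: lime_le; first by apply/cvg_ex; eexists; exact: cvg_mu.
by apply: nearW => n; apply: muC; rewrite ltrBlDr ltrDl invr_gt0 ltr0n.
Qed.

End continuity_from_below.

Lemma nondecreasing_le_lim_at_left {R : realType} (f : R -> R) (a b s : R) :
  {in `[a, b] &, nondecreasing_fun f} -> a <= s < b ->
  f s <= lim (f t @[t --> b^'-]).
Proof.
move=> ndf /andP[a_s sb].
have ndf_sb x y : s <= x -> y <= b -> x <= y -> f x <= f y.
  move=> sx yb xy; apply: ndf => //; rewrite in_itv /=.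
    by rewrite (le_trans a_s sx) (le_trans xy yb).
  by rewrite (le_trans a_s (le_trans sx xy)) yb.
have near_sb : \forall t \near b^'-, s < t < b.
  near=> t; apply/andP; split; last by near: t; exact: nbhs_left_lt.
  by near: t; exact: nbhs_left_gt.
have cvg_f : cvg (f t @[t --> b^'-]).
  apply: nondecreasing_at_left_is_cvgr.
    apply: filterS near_sb => x /andP[sx _] y z.
    rewrite !in_itv /= => /andP[xy _] /andP[_ zb] yz.
    exact: ndf_sb (ltW (lt_trans sx xy)) (ltW zb) yz.
  apply: filterS near_sb => x /andP[sx _]; exists (f b) => _ [y + <-].
  rewrite /= in_itv /= => /andP[xy yb].
  exact: ndf_sb (ltW (lt_trans sx xy)) (lexx b) (ltW yb).
apply: (limr_ge cvg_f); apply: filterS near_sb => t /andP[st tb].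
exact: ndf_sb (lexx s) (ltW tb) (ltW st).
Unshelve. all: by end_near.
Qed.

Lemma measure_set1_gt0_of_jump {R : realType} (w : R -> R)
    (mu : {measure set R -> \bar R}) :
  {in `[0, 1] &, nondecreasing_fun w} -> is_measure_of_w w mu ->
  lim (w t @[t --> 1^'-]) < w 1 -> (0 < mu [set 1%R])%E.
Proof.
move=> ndw mu_w w_jump; set l := lim _ in w_jump.
have w_le_l s : 0 <= s < 1 -> w s <= l by exact: nondecreasing_le_lim_at_left.
have mu_lt1 : (mu `]-oo, 1%R[%classic <= l%:E)%E.
  apply: measure_itvNyo_le => r r1; rewrite mu_w (ltW r1).
  case: ltP => [_|r0]; last by rewrite lee_fin w_le_l ?r0.
  rewrite lee_fin (le_trans _ (w_le_l 0 _)) ?lexx ?ltr01// -lee_fin.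
  by have := mu_w 0; rewrite ltxx ler01 => <-; exact: measure_ge0.
have mu_split : mu `]-oo, 1]%classic = (mu `]-oo, 1%R[%classic + mu [set 1%R])%E.
  rewrite -(@setUitv1 _ _ _ _ true)// measureU//=.
  by rewrite setIC set1I memNset//= in_itv/= ltxx.
move: mu_split; rewrite mu_w ltr10 lexx => w1E.
rewrite lt0e measure_ge0 andbT; apply: contraTneq w_jump => mu1_0.
by rewrite -leNgt -lee_fin w1E mu1_0 adde0.
Qed.

Section integral_without_measurability.
Context {d} {T : measurableType d} {R : realType} (mu : {measure set T -> \bar R}).
Local Open Scope ereal_scope.

Lemma ge0_le_integral_patch (D1 D2 : set T) (f g : T -> \bar R) :
  (forall x, D1 x -> 0 <= f x) -> (forall x, D2 x -> 0 <= g x) ->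
  (forall x, (f \_ D1) x <= (g \_ D2) x) ->
  \int[mu]_(x in D1) f x <= \int[mu]_(x in D2) g x.
Proof.
move=> f0 g0 fg; rewrite (ge0_integralE mu f0) (ge0_integralE mu g0).
apply: ereal_sup_le => _ [h hf <-]; exists h => //= x.
exact: le_trans (hf x) (fg x).
Qed.

Lemma integral_lty_of_ub (D : set T) (f : T -> \bar R) (M : R) :
  measurable D -> mu D < +oo -> (forall x, D x -> f x <= M%:E) ->
  \int[mu]_(x in D) f x < +oo.
Proof.
move=> mD muD fM; set M' := Num.max M 0%R.
have M'0 : (0 <= M')%R by rewrite le_max lexx orbT.
have fposM' x : D x -> f^\+ x <= M'%:E.
  move=> Dx; rewrite funeposE ge_max lee_fin M'0 andbT (le_trans (fM x Dx))//.
  by rewrite lee_fin le_max lexx.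
have int_fpos : \int[mu]_(x in D) f^\+ x <= M'%:E * mu D.
  rewrite -integral_cst//; apply: ge0_le_integral_patch => [x _|x _|x].
  - exact: funepos_ge0.
  - by rewrite lee_fin.
  - by rewrite /patch; case: ifPn => [/set_mem/fposM'|].
rewrite integralE; apply: le_lt_trans (leeB (lexx _) (integral_ge0 _ _)) _.
  by move=> x _; exact: funeneg_ge0.
by rewrite sube0; apply: le_lt_trans int_fpos _; rewrite lte_mul_pinfty ?lee_fin.
Qed.

End integral_without_measurability.

Lemma Lfun_infty_ae_ub {d} {T : measurableType d} {R : realType}
    {mu : {measure set T -> \bar R}} {f : T -> R} :
  f \in Lfun mu +oo%E -> exists2 M, 0 <= M & \forall x \ae mu, f x <= M.
Proof.
move=> /sub_Lfun_finLfun; rewrite inE /= /finite_norm unlock /=.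
have [mu_pos|] := ltP 0%E (mu [set: T]); last first.
  move=> muT0 _; exists 0 => //; exists [set: T]; split => //.
  by apply/eqP; rewrite eq_le muT0 measure_ge0.
have -> : (abse \o (EFin \o f)) = EFin \o (Num.norm \o f) by [].
move=> /ess_supr_bounded[M fM].
exists (Num.max M 0); first by rewrite le_max lexx orbT.
by apply: filterS fM => x /(le_trans (ler_norm _)) /le_trans; apply; rewrite le_max lexx.
Qed.

Lemma quantile_le_ae_ub {d} {T : measurableType d} {R : realType}
    {P : probability T R} {X : T -> R} {M : R} :
  measurable_fun setT X -> 0 <= M -> (\forall x \ae P, X x <= M) ->
  forall t, t < 1 -> quantile P X t <= M.
Proof.
move=> mX M0 XM t t1.
have PXM : P [set x | X x <= M] = 1%E.
  have mXE : measurable_fun setT (EFin \o X) by exact/measurable_EFinP.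
  have /ae_le_measureP : \forall x \ae P, ((EFin \o X) x <= M%:E)%E.
    by apply: filterS XM => x; rewrite /= lee_fin.
  move=> /(_ mXE) P0.
  have -> : [set x | X x <= M] = ~` ((EFin \o X) @^-1` `]M%:E, +oo[).
    by apply/seteqP; split => x /=;
      rewrite in_itv /= andbT lte_fin leNgt => /negP.
  rewrite (probability_setC P) ?P0 ?sube0// -[X in measurable X]setTI.
  exact: mXE measurableT _ (emeasurable_itv _).
rewrite /quantile; set S := [set y | _].
have SM : S M by rewrite /S /= PXM lte_fin.
(* [inf] of a set without lower bound is [0], whence the hypothesis [0 <= M] *)
have [S_lb|S_nlb] := pselect (has_lbound S); first exact: ge_inf.
by rewrite inf_out// => -[].
Qed.

Lemma qext_le {R : realType} {Q : R -> R} {M : R} :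
  0 <= M -> (forall t, t < 1 -> Q t <= M) -> forall s, (qext Q s <= M%:E)%E.
Proof.
move=> M0 QM s; rewrite /qext; case: ifPn => [s1|_]; first by rewrite lee_fin QM.
have [Q_cvg|Q_dvg] := pselect (cvg ((Q t)%:E @[t --> 1^'-])); last first.
  (* [lim] of a divergent function is [0], whence the hypothesis [0 <= M] *)
  by rewrite dvgP// lee_fin.
apply: lime_le => //; near=> t; rewrite lee_fin; apply: QM.
by near: t; rewrite near_withinE; exact: nearW.
Unshelve. all: by end_near.
Qed.

Section quarter_pole.
Context {R : realType}.
Local Notation lebesgue := (@lebesgue_measure R).

Lemma integral_inv_sqrt (a : R) : 0 < a < 1 ->
  (\int[lebesgue]_(x in `[a, 1%R]) ((Num.sqrt x)^-1)%:E = (2 - 2 * Num.sqrt a)%:E)%E.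
Proof.
move=> /andP[a0 a1].
pose F x : R := 2 * Num.sqrt x.
have dF (x : R) : 0 < x -> is_derive x 1 F (Num.sqrt x)^-1.
  move=> x0; have -> : (Num.sqrt x)^-1 = 2 *: (2 * Num.sqrt x)^-1.
    by rewrite /GRing.scale /= invfM mulrA divff ?mul1r.
  exact: is_deriveZ (is_derive1_sqrt x0).
have cF : continuous F.
  by move=> x; apply: cvgM; [exact: cvg_cst | exact: sqrt_continuous].
have -> : 2 - 2 * Num.sqrt a = F 1 - F a by rewrite /F sqrtr1 mulr1.
rewrite EFinB; apply: continuous_FTC2 => //.
- apply: continuous_in_subspaceT => x; rewrite inE /= in_itv /= => /andP[ax _].
  apply: continuousV; first by rewrite gt_eqF // sqrtr_gt0 (lt_le_trans a0 ax).
  exact: sqrt_continuous.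
- split.
  + by move=> x; rewrite in_itv /= => /andP[ax _]; have [] := dF x (lt_trans a0 ax).
  + exact/cvg_at_right_filter/cF.
  + exact/cvg_at_left_filter/cF.
- move=> x; rewrite in_itv /= => /andP[ax _].
  by rewrite derive1E; apply: derive_val; exact: dF (lt_trans a0 ax).
Qed.

Definition inv_sqrt_onem (s : R) : R := (Num.sqrt (1 - s))^-1.

Lemma inv_sqrt_onem_ge0 s : 0 <= inv_sqrt_onem s.
Proof. by rewrite invr_ge0 sqrtr_ge0. Qed.

Lemma continuous_inv_sqrt_onem s : s < 1 -> {for s, continuous inv_sqrt_onem}.
Proof.
move=> s1; apply: continuousV; first by rewrite gt_eqF // sqrtr_gt0 subr_gt0.
apply: continuous_comp; last exact: sqrt_continuous.
by apply: continuousB; [exact: cvg_cst | exact: cvg_id].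
Qed.

Lemma measurable_inv_sqrt_onem : measurable_fun (`[0, 1[ : set R) inv_sqrt_onem.
Proof.
apply: (@measurable_funS _ _ _ _ (`]-oo, 1%R[ : set R)) => //.
  by move=> x /=; rewrite !in_itv /= => /andP[].
apply: open_continuous_measurable_fun; first exact: interval_open.
by move=> x; rewrite inE /= in_itv /=; exact: continuous_inv_sqrt_onem.
Qed.

Lemma integral_inv_sqrt_onem_itvcc_le r : r < 1 ->
  (\int[lebesgue]_(x in `[0%R, r]) (inv_sqrt_onem x)%:E <= 2%:E)%E.
Proof.
move=> r1; have [r0|r0] := ltP r 0.
  by rewrite set_itv_ge ?integral_set0// bnd_simp -ltNge.
have [->|r0'] := eqVneq r 0; first by rewrite set_itv1 integral_set1.
rewrite integration_by_substitution_onem ?r0 ?(ltW r1)//; last first.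
  apply: continuous_in_subspaceT => x; rewrite inE /= in_itv /= => /andP[_ xr].
  exact: continuous_inv_sqrt_onem (le_lt_trans xr r1).
under eq_integral do rewrite /inv_sqrt_onem /onem subKr.
rewrite integral_inv_sqrt; last first.
  by rewrite onem_gt0 //= onem_lt1// lt_neqAle eq_sym r0' r0.
by rewrite lee_fin gerBl mulr_ge0 // sqrtr_ge0.
Qed.

Lemma integral_inv_sqrt_onem_le :
  (\int[lebesgue]_(x in `[0%R, 1%R[) (inv_sqrt_onem x)%:E <= 2%:E)%E.
Proof.
apply: ge0_integral_itvco_le.
- by apply/measurable_EFinP; exact: measurable_inv_sqrt_onem.
- by move=> x _; rewrite lee_fin inv_sqrt_onem_ge0.
- exact: integral_inv_sqrt_onem_itvcc_le.
Qed.

Definition Qpole (s : R) : R := Num.sqrt (inv_sqrt_onem s).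

Lemma Qpole_ge0 s : 0 <= Qpole s. Proof. exact: sqrtr_ge0. Qed.

Lemma Qpole_sqr s : Qpole s ^+ 2 = inv_sqrt_onem s.
Proof. by rewrite sqr_sqrtr // inv_sqrt_onem_ge0. Qed.

Lemma continuous_Qpole s : s < 1 -> {for s, continuous Qpole}.
Proof.
move=> s1; apply: continuous_comp; first exact: continuous_inv_sqrt_onem.
exact: sqrt_continuous.
Qed.

Lemma le_Qpole s t : s <= t -> t < 1 -> Qpole s <= Qpole t.
Proof.
move=> st t1; have s1 := le_lt_trans st t1.
rewrite ler_sqrt ?inv_sqrt_onem_ge0 // lef_pV2 ?posrE ?sqrtr_gt0 ?subr_gt0 //.
by rewrite ler_sqrt ?subr_ge0 ?(ltW t1) //; lra.
Qed.

Lemma Qset_Qpole : Qset Qpole.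
Proof.
split; [|split].
- move=> s t _; rewrite in_itv /= => /andP[_ t1] st; exact: le_Qpole.
- by move=> s /andP[_ s1]; apply: cvg_at_right_filter; exact: continuous_Qpole.
- under eq_integral do rewrite Qpole_sqr.
  exact: le_lt_trans integral_inv_sqrt_onem_le (ltry _).
Qed.

Lemma Qpole_cvgy : Qpole t @[t --> 1^'-] --> +oo.
Proof.
apply/cvgryPge => A; have [A0|A0] := lerP A 0.
  by apply: nearW => t; exact: le_trans A0 (Qpole_ge0 t).
(* [A <= Qpole t] as soon as [1 - t <= A^-4] *)
near=> t.
have t1 : t < 1 by near: t; exact: nbhs_left_lt.
have tA : 1 - t < (A ^+ 4)^-1.
  by near: t; apply: nbhs_left_ltBl; rewrite invr_gt0 exprn_gt0.
rewrite /Qpole -(ger0_norm (ltW A0)) -sqrtr_sqr ler_sqrt ?inv_sqrt_onem_ge0 //.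
rewrite /inv_sqrt_onem -[A ^+ 2]invrK.
rewrite lef_pV2 ?posrE ?sqrtr_gt0 ?invr_gt0 ?exprn_gt0 ?subr_gt0 //.
have -> : (A ^+ 2)^-1 = Num.sqrt ((A ^+ 2)^-1 ^+ 2).
  by rewrite sqrtr_sqr ger0_norm// invr_ge0 exprn_ge0// ltW.
rewrite ler_sqrt ?exprn_ge0 ?invr_ge0 ?exprn_ge0 ?(ltW A0)// exprVn -exprM.
exact: ltW.
Unshelve. all: by end_near.
Qed.

Lemma lim_Qpole : lim ((Qpole t)%:E @[t --> 1^'-]) = +oo%E.
Proof. by apply: cvg_lim => //; exact/cvgeryP/Qpole_cvgy. Qed.

Lemma qext_Qpole1 : qext Qpole 1 = +oo%E.
Proof. by rewrite /qext ltxx lim_Qpole. Qed.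

Lemma qext_Qpole_ge0 s : (0 <= qext Qpole s)%E.
Proof.
by rewrite /qext; case: ifPn => _; rewrite ?lee_fin ?Qpole_ge0 ?lim_Qpole ?leey.
Qed.

Lemma integral_qext_Qpole (mu : {measure set R -> \bar R}) :
  (0 < mu [set 1%R])%E -> (\int[mu]_(s in `[0%R, 1%R]) qext Qpole s = +oo)%E.
Proof.
move=> mu1_gt0; apply/eqP; rewrite -leye_eq.
have <- : (\int[mu]_(s in [set 1%R]) qext Qpole s = +oo)%E.
  rewrite -[RHS](gt0_mulye mu1_gt0) -integral_cst//.
  by apply: eq_integral => s /set_mem /= ->; exact: qext_Qpole1.
apply: (ge0_le_integral_patch mu) => [s _|s _|s]; rewrite ?qext_Qpole_ge0//.
rewrite /patch; case: ifPn => [/set_mem /= ->|_].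
  by rewrite mem_set//= in_itv/= ler01 lexx.
by case: ifPn => _; rewrite ?qext_Qpole_ge0.
Qed.

End quarter_pole.

Theorem lemma5p1 (R : realType) (d : measure_display) (Omega : measurableType d)
  (P : probability Omega R)
  (P_complete : measure_is_complete P) (P_nonatomic : nonatomic P)
  (rho : Omega -> R) (rho_L2 : rho \in Lfun P 2%:E)
  (rho_pos : P [set om | 0 < rho om] = 1%E)
  (rho_var : (0 < 'V_P[rho])%E)
  (X0 : Omega -> R) (X0_Linf : X0 \in Lfun P +oo%E)
  (beta lambda : R) (lambda_pos : 0 < lambda)
  (w : R -> R) (w_icx : Wicx w)
  (mu : {measure set R -> \bar R}) (mu_w : is_measure_of_w w mu)
  (w_jump : lim (w t @[t --> 1^'-]) < w 1) :
  ereal_inf [set Lfunctional Q (quantile P X0) (quantile P rho) mu beta lambda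
            | Q in @Qset R] = -oo%E.
Proof.
have mu1_gt0 : (0 < mu [set 1%R])%E.
  by case: w_icx => ndw _; exact: measure_set1_gt0_of_jump ndw mu_w w_jump.
have [M M0 X0_le] := Lfun_infty_ae_ub X0_Linf.
have mX0 : measurable_fun setT X0 := set_mem (sub_Lfun_mfun X0_Linf).
have Q0_le := qext_le M0 (quantile_le_ae_ub mX0 M0 X0_le).
have mu01_lty : (mu `[0%R, 1%R]%classic < +oo)%E.
  have : (mu `[0%R, 1%R]%classic <= mu `]-oo, 1%R]%classic)%E.
    by apply: le_measure; rewrite ?inE//; exact: subset_itvr.
  by move=> /le_lt_trans; apply; rewrite mu_w ltr10 lexx ltry.
have int_Q0_lty : (\int[mu]_(s in `[0%R, 1%R]) qext (quantile P X0) s < +oo)%E.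
  by apply: (integral_lty_of_ub mu _ _ M) => // s _; exact: Q0_le.
(* [x + -oo = -oo] for every [x : \bar R], so the first two integrals of the
   functional need not be shown finite (they are, as Qpole is in L^2). *)
have L_Qpole :
    Lfunctional Qpole (quantile P X0) (quantile P rho) mu beta lambda = -oo%E.
  rewrite /Lfunctional (integral_qext_Qpole _ mu1_gt0) addye ?addeNy//.
  by rewrite eqe_oppLR /= (lt_eqF int_Q0_lty).
apply/eqP; rewrite eq_le leNye andbT -L_Qpole.
by apply: ereal_inf_lbound; exists Qpole => //; exact: Qset_Qpole.
Qed.
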